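(* Let $R>0$, $b\in\mathbb{R}^n\setminus\{0\}$, $a=\frac{|b|^2-R^2}{|b|^2}b$, and on $P=\{x:2|b|^2-R^2-2\langle b,x\rangle>0\}$ let $f(x)=\frac{|b|^2|x-a|^2}{2|b|^2-R^2-2\langle b,x\rangle}$. Let $k\ge2$ and let $\Sigma$ be a smooth $k$-dimensional submanifold of $P\setminus\{a\}$. Define on $\Sigma$ the vector field $$W(x)=\frac1k f(x)^{-\frac k2}(x-a)-F(f(x))\frac{b}{|b|^2},\qquad F(t)=\begin{cases}\frac{1}{k-2}t^{-\frac{k-2}{2}},&k\ge3,\\ -\frac12\log t,&k=2.\end{cases}$$ Then $$\operatorname{div}_\Sigma W=f^{-\frac k2}\frac{|(x-a)^\perp|^2}{|x-a|^2}+f^{-\frac{k-4}{2}}\frac{|b^\top|^2}{|b|^4|x-a|^2}.$$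
   Context: $\operatorname{div}_\Sigma X=\sum_{i=1}^k\langle D_{e_i}X,e_i\rangle$ for an orthonormal basis $e_i$ of $T_x\Sigma$ (tangential divergence of an ambient vector field along $\Sigma$). $X^\top$ is the orthogonal projection of $X$ onto $T_x\Sigma$ and $X^\perp=X-X^\top$. *)

From HB Require Import structures.
From mathcomp Require Import all_boot all_order all_algebra.
From mathcomp Require Import all_classical all_reals all_analysis.
Set Implicit Arguments. Unset Strict Implicit. Unset Printing Implicit Defensive.
Import Order.TTheory GRing.Theory Num.Theory.
Import numFieldNormedType.Exports.
Local Open Scope ring_scope.

Definition dotv {R : realType} {n : nat} (u v : 'rV[R]_n) : R :=
  \sum_(i < n) u 0 i * v 0 i.
Definition nsq {R : realType} {n : nat} (u : 'rV[R]_n) : R := dotv u u.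

(* e : 'I_k -> 'rV_n is an orthonormal family (basis of a k-dim subspace T). *)
Definition orthonormal_fam {R : realType} {n k : nat} (e : 'I_k -> 'rV[R]_n) : Prop :=
  forall i j, dotv (e i) (e j) = (i == j)%:R.

Definition tproj {R : realType} {n k : nat} (e : 'I_k -> 'rV[R]_n) (X : 'rV[R]_n)
  : 'rV[R]_n := \sum_(i < k) dotv X (e i) *: e i.
Definition nproj {R : realType} {n k : nat} (e : 'I_k -> 'rV[R]_n) (X : 'rV[R]_n)
  : 'rV[R]_n := X - tproj e X.

(* tangential divergence of an ambient field W at x along span(e) *)
Definition divT {R : realType} {n k : nat} (e : 'I_k -> 'rV[R]_n)
  (W : 'rV[R]_n -> 'rV[R]_n) (x : 'rV[R]_n) : R :=
  \sum_(i < k) dotv ('D_(e i) W x) (e i).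

Definition ptA {R : realType} {n : nat} (Rad : R) (b : 'rV[R]_n) : 'rV[R]_n :=
  ((nsq b - Rad ^+ 2) / nsq b) *: b.
Definition denP {R : realType} {n : nat} (Rad : R) (b x : 'rV[R]_n) : R :=
  2 * nsq b - Rad ^+ 2 - 2 * dotv b x.
Definition fB {R : realType} {n : nat} (Rad : R) (b x : 'rV[R]_n) : R :=
  nsq b * nsq (x - ptA Rad b) / denP Rad b x.
Definition FF {R : realType} (k : nat) (t : R) : R :=
  if (3 <= k)%N then (k%:R - 2)^-1 * t `^ (- ((k%:R - 2) / 2))
  else - (1 / 2) * ln t.
Definition WB {R : realType} {n : nat} (k : nat) (Rad : R) (b x : 'rV[R]_n)
  : 'rV[R]_n :=
  ((k%:R)^-1 * fB Rad b x `^ (- (k%:R / 2))) *: (x - ptA Rad b)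
  - (FF k (fB Rad b x) / nsq b) *: b.

From HB Require Import structures.
From mathcomp Require Import all_boot all_order all_algebra.
From mathcomp Require Import all_classical all_reals all_analysis.
From mathcomp Require Import ring lra.
Import Order.TTheory GRing.Theory Num.Theory.
Import numFieldNormedType.Exports.
Local Open Scope ring_scope.
Local Open Scope classical_set_scope.

(* With d = 2|b|^2 - R^2 - 2<b,x>, the logarithmic derivative of f along v is
   2<x-a,v>/|x-a|^2 + 2<b,v>/d, and F'(t) = -t^(-k/2)/2 both for k = 2 and for
   k >= 3.  Pairing the derivative of W along a unit vector u with u gives
   f^(-k/2) (1/k - <x-a,u>^2/|x-a|^2 + |x-a|^2 <b,u>^2/d^2): the mixed terms
   <x-a,u><b,u> cancel because f/|b|^2 = |x-a|^2/d.  Summing over an orthonormal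
   basis and using f^2 = |b|^4 |x-a|^4/d^2 gives the formula. *)


Section DirectionalDerivative.
Context {R : realType}.

Lemma is_derive_affine_quotient {V W : normedModType R} (F : V -> W) x v (c d : W) :
  (forall h : R, h != 0 -> h^-1 *: (F (h *: v + x) - F x) = c + h *: d) ->
  is_derive x v F c.
Proof.
move=> quotE.
have cv : (fun h : R => h^-1 *: (F (h *: v + x) - F x)) @ 0^' --> c.
  apply: (@cvg_trans _ ((fun h : R => c + h *: d) @ 0^')).
    apply: near_eq_cvg; near=> h; rewrite quotE //.
    near: h; exact: nbhs_dnbhs_neq.
  suff : (fun h : R => c + h *: d) @ 0^' --> c + 0 *: d by rewrite scale0r addr0.
  apply: cvgD; first exact: cvg_cst.
  by apply: cvgZr_tmp; apply: cvg_within_filter; exact: cvg_id.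
split; first by apply/cvg_ex; exists c.
exact: cvg_lim.
Unshelve. all: by end_near. Qed.

Lemma derive_along_line {V W : normedModType R} (G : V -> W) x v :
  'D_v G x = 'D_1 (fun h : R => G (h *: v + x)) 0.
Proof.
rewrite /derive [X in _ = lim (X @ _)](_ : _ =
  (fun h : R => h^-1 *: (G (h *: v + x) - G x))) //.
apply: funext => h /=.
by rewrite scale0r add0r addr0 -[h%:A]/(h * 1) mulr1.
Qed.

(* The library chain rule is for maps [R -> R]; reduce to it along the line
   [h |-> h *: v + x]. *)
Lemma is_derive_comp_real {V : normedModType R} {f : V -> R} {g : R -> R} {x v df dg} :
  is_derive (f x) 1 g dg -> is_derive x v f df ->
  is_derive x v (fun y => g (f y)) (dg * df).
Proof.
move=> dgE [fv <-].
pose fl := fun h : R => f (h *: v + x).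
have dfl : is_derive (0 : R) (1 : R) fl ('D_v f x).
  split; first exact/(derivable1P _ _ _).1.
  by rewrite [RHS]derive_along_line.
have fl0 : fl 0 = f x by rewrite /fl scale0r add0r.
rewrite -fl0 in dgE.
have [dgfl dgflE] := is_derive1_comp dgE dfl.
split; first by apply/derivable1P.
by rewrite derive_along_line -dgflE.
Qed.

Lemma is_deriveZfun {V W : normedModType R} {a : V -> R} {w : V -> W} {x v da dw} :
  is_derive x v a da -> is_derive x v w dw ->
  is_derive x v (fun y => a y *: w y) (a x *: dw + da *: w x).
Proof.
move=> [av <-] [wv <-].
have cv : (fun h : R => h^-1 *: (a (h *: v + x) *: w (h *: v + x) - a x *: w x))
    @ 0^' --> a x *: 'D_v w x + 'D_v a x *: w x.
  evar (q : R -> W); rewrite [X in X @ _](_ : _ = q) /=; last first.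
    rewrite funeqE => h.
    have -> : a (h *: v + x) *: w (h *: v + x) - a x *: w x =
        a (h *: v + x) *: (w (h *: v + x) - w x) + (a (h *: v + x) - a x) *: w x.
      by rewrite scalerBr scalerBl addrA subrK.
    rewrite scalerDr scalerA mulrC -scalerA.
    by rewrite [_ *: ((_ - _) *: w x)]scalerA /q.
  apply: cvgD; last exact: cvgZr_tmp av.
  apply: cvg_comp2 (@scale_continuous _ _ (_, _)) => /=; last exact: wv.
  suff : {for 0, continuous (fun h : R => a (h *: v + x))}.
    by move=> /continuous_withinNx; rewrite scale0r add0r.
  exact/differentiable_continuous/derivable1_diffP/(derivable1P _ _ _).1.
split; first by apply/cvg_ex; eexists; exact: cv.
exact: cvg_lim.
Qed.

Lemma is_deriveVfun {V : normedModType R} {f : V -> R} {x v df} :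
  f x != 0 -> is_derive x v f df ->
  is_derive x v (fun y => (f y)^-1) (- (f x) ^- 2 * df).
Proof.
move=> fx0 [fv <-]; split; first exact: derivableV.
by rewrite deriveV.
Qed.

End DirectionalDerivative.

Section InnerProduct.
Context {R : realType} {n : nat}.
Implicit Types u w z a x v : 'rV[R]_n.

Lemma dotvC u w : dotv u w = dotv w u.
Proof. by apply: eq_bigr => i _; rewrite mulrC. Qed.

Lemma dotvDl u w z : dotv (u + w) z = dotv u z + dotv w z.
Proof. by rewrite /dotv -big_split; apply: eq_bigr => i _; rewrite !mxE mulrDl. Qed.

Lemma dotvZl (c : R) u z : dotv (c *: u) z = c * dotv u z.
Proof. by rewrite /dotv mulr_sumr; apply: eq_bigr => i _; rewrite !mxE mulrA. Qed.

Lemma dotvNl u z : dotv (- u) z = - dotv u z.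
Proof. by rewrite -scaleN1r dotvZl mulN1r. Qed.

Lemma dotvBl u w z : dotv (u - w) z = dotv u z - dotv w z.
Proof. by rewrite dotvDl dotvNl. Qed.

Lemma dotvDr u w z : dotv z (u + w) = dotv z u + dotv z w.
Proof. by rewrite dotvC dotvDl !(dotvC z). Qed.

Lemma dotvZr (c : R) u z : dotv z (c *: u) = c * dotv z u.
Proof. by rewrite dotvC dotvZl dotvC. Qed.

Lemma dotv_suml k (f : 'I_k -> 'rV[R]_n) z :
  dotv (\sum_(i < k) f i) z = \sum_(i < k) dotv (f i) z.
Proof.
elim/big_ind2: _ => [|u1 r1 u2 r2 <- <-|//]; last by rewrite dotvDl.
by rewrite /dotv big1 // => i _; rewrite mxE mul0r.
Qed.

Lemma dotv_sumr k (f : 'I_k -> 'rV[R]_n) z :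
  dotv z (\sum_(i < k) f i) = \sum_(i < k) dotv z (f i).
Proof. by rewrite dotvC dotv_suml; apply: eq_bigr => i _; rewrite dotvC. Qed.

Lemma nsqD u w : nsq (u + w) = nsq u + 2 * dotv u w + nsq w.
Proof. rewrite /nsq dotvDl !dotvDr (dotvC w u); ring. Qed.

Lemma nsqN u : nsq (- u) = nsq u.
Proof. by rewrite /nsq dotvNl dotvC dotvNl opprK. Qed.

Lemma nsq_gt0 u : u != 0 -> 0 < nsq u.
Proof.
move=> u0; rewrite lt_def sumr_ge0 ?andbT => [|i _]; last by rewrite -expr2 sqr_ge0.
apply: contra u0 => /eqP /psumr_eq0P u2_eq0.
apply/eqP/rowP => j; rewrite mxE; apply/eqP; rewrite -sqrf_eq0 expr2.
by apply/eqP/u2_eq0 => // i _; rewrite -expr2 sqr_ge0.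
Qed.

Lemma is_derive_nsqB a x v :
  is_derive x v (fun y => nsq (y - a)) (2 * dotv (x - a) v).
Proof.
apply: (@is_derive_affine_quotient _ _ _ _ _ _ _ (nsq v)) => h h0.
rewrite -addrA nsqD addrK /nsq dotvZl dotvZr dotvZl /GRing.scale /= (dotvC (x - a)).
by field.
Qed.

Lemma is_derive_subr a x v : is_derive x v (fun y => y - a) v.
Proof.
apply: (@is_derive_affine_quotient _ _ _ _ _ _ _ 0) => h h0.
by rewrite opprB addrA subrK addrK scaler0 addr0 scalerA mulVf // scale1r.
Qed.

Section Orthonormal.
Variables (k : nat) (e : 'I_k -> 'rV[R]_n).
Hypothesis e_on : orthonormal_fam e.

Lemma dotv_tproj u i : dotv (e i) (tproj e u) = dotv u (e i).
Proof.
rewrite /tproj dotv_sumr (bigD1 i) //= big1 => [|j ji].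
  by rewrite dotvZr e_on eqxx mulr1 addr0.
by rewrite dotvZr e_on eq_sym (negbTE ji) mulr0.
Qed.

Lemma nsq_tproj u : nsq (tproj e u) = \sum_(i < k) dotv u (e i) ^+ 2.
Proof.
rewrite {1}/nsq {1}/tproj dotv_suml; apply: eq_bigr => i _.
by rewrite dotvZl dotv_tproj expr2.
Qed.

Lemma nsq_nproj u : nsq (nproj e u) = nsq u - nsq (tproj e u).
Proof.
have cross : dotv u (tproj e u) = nsq (tproj e u).
  rewrite nsq_tproj /tproj dotv_sumr; apply: eq_bigr => i _.
  by rewrite dotvZr expr2.
by rewrite /nproj nsqD nsqN dotvC dotvNl dotvC cross; ring.
Qed.

End Orthonormal.

End InnerProduct.

Lemma is_derive_FF {R : realType} {k : nat} {t : R} : (2 <= k)%N -> 0 < t ->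
  is_derive t 1 (FF k) (- (1 / 2) * t `^ (- (k%:R / 2))).
Proof.
move=> k2 t_gt0; rewrite /FF; case: (leqP 3 k) => k3.
  have k3R : 3 <= k%:R :> R by rewrite ler_nat.
  apply: is_derive_eq.
    exact: is_deriveM (is_derive_cst ((k%:R - 2)^-1 : R^o) t 1) (is_derive1_powR _ t_gt0).
  rewrite /GRing.scale /= mulr0 addr0.
  have -> : - ((k%:R - 2) / 2) - 1 = - (k%:R / 2) :> R by field.
  by field; lra.
have -> : k = 2%N by apply/eqP; rewrite eqn_leq k2 -ltnS k3.
apply: is_derive_eq.
  exact: is_deriveM (is_derive_cst ((- (1 / 2)) : R^o) t 1) (is_derive1_ln t_gt0).
rewrite /GRing.scale /= mulr0 addr0 (_ : - (2%:R / 2) = -1 :> R); last by field.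
by rewrite powR_inv1 // ltW.
Qed.

Section InversionField.
Context {R : realType} {n : nat} {Rad : R} {b : 'rV[R]_n}.
Implicit Types x v u : 'rV[R]_n.

Local Notation a := (ptA Rad b).
Local Notation d := (denP Rad b).
Local Notation f := (fB Rad b).

Definition dlog_fB x v : R :=
  2 * dotv (x - a) v / nsq (x - a) + 2 * dotv b v / d x.

Lemma is_derive_denP x v : is_derive x v d (- (2 * dotv b v)).
Proof.
apply: (@is_derive_affine_quotient _ _ _ _ _ _ _ 0) => h h0.
by rewrite /denP dotvDr dotvZr scaler0 addr0 /GRing.scale /=; field.
Qed.

Lemma is_derive_fB x v : 0 < d x -> x != a ->
  is_derive x v f (f x * dlog_fB x v).
Proof.
move=> d_gt0 xa; have xa_gt0 : 0 < nsq (x - a) by rewrite nsq_gt0 // subr_eq0.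
have {1}-> : f = (fun y => nsq b * nsq (y - a)) * (fun y => (d y)^-1).
  by apply: funext => y; rewrite /fB.
apply: is_derive_eq.
  apply: is_deriveM; last exact: is_deriveVfun (lt0r_neq0 d_gt0) (is_derive_denP x v).
  exact: is_deriveM (is_derive_cst (nsq b) x v) (is_derive_nsqB a x v).
rewrite /GRing.scale /= /fB /dlog_fB mulr0 addr0.
by field; rewrite !lt0r_neq0.
Qed.

Hypothesis b_neq0 : b != 0.

Lemma fB_gt0 x : 0 < d x -> x != a -> 0 < f x.
Proof.
move=> d_gt0 xa; rewrite /fB divr_gt0 // mulr_gt0 // nsq_gt0 //.
by rewrite subr_eq0.
Qed.

Lemma is_derive_WB k x v : (2 <= k)%N -> 0 < d x -> x != a ->
  is_derive x v (WB k Rad b) (f x `^ (- (k%:R / 2)) *: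
    (k%:R^-1 *: v - (dlog_fB x v / 2) *: (x - a)
     + (f x * dlog_fB x v / (2 * nsq b)) *: b)).
Proof.
move=> k2 d_gt0 xa.
have f_gt0 := fB_gt0 x d_gt0 xa.
have k_gt0 : 0 < k%:R :> R by rewrite ltr0n ltnW.
have b_gt0 := nsq_gt0 _ b_neq0.
pose p : R := - (k%:R / 2).
have coef_der : is_derive x v (fun y => k%:R^-1 * f y `^ p)
    (k%:R^-1 * (p * f x `^ (p - 1)) * (f x * dlog_fB x v)).
  have pow_der := is_deriveM (is_derive_cst (k%:R^-1 : R^o) (f x) 1)
    (is_derive1_powR p f_gt0).
  apply: (is_derive_eq (is_derive_comp_real pow_der (is_derive_fB x v d_gt0 xa))).
  by rewrite /GRing.scale /= mulr0 addr0.
have FF_der : is_derive x v (fun y => FF k (f y) / nsq b)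
    (- (1 / 2) * f x `^ p / nsq b * (f x * dlog_fB x v)).
  have FFb_der := is_deriveM (is_derive_FF k2 f_gt0)
    (is_derive_cst ((nsq b)^-1 : R^o) (f x) 1).
  apply: (is_derive_eq (is_derive_comp_real FFb_der (is_derive_fB x v d_gt0 xa))).
  by rewrite /GRing.scale /= mulr0 add0r; ring.
have -> : WB k Rad b = (fun y => (k%:R^-1 * f y `^ p) *: (y - a))
    - (fun y => (FF k (f y) / nsq b) *: b).
  by apply: funext => y; rewrite /WB.
apply: is_derive_eq.
  apply: is_deriveB; first exact: is_deriveZfun coef_der (is_derive_subr a x v).
  exact: is_deriveZfun FF_der (is_derive_cst b x v).
have fp1 : f x `^ (p - 1) = f x `^ p / f x.
  by rewrite powRB ?lt0r_neq0 ?implybT // powRr1 // ltW.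
rewrite scaler0 add0r fp1; apply/rowP => j; rewrite !mxE /p.
by field; rewrite !lt0r_neq0.
Qed.

Lemma dotv_derive_WB {k x u} : (2 <= k)%N -> 0 < d x -> x != a -> nsq u = 1 ->
  dotv ('D_u (WB k Rad b) x) u = f x `^ (- (k%:R / 2)) *
    (k%:R^-1 - dotv (x - a) u ^+ 2 / nsq (x - a)
     + nsq (x - a) / d x ^+ 2 * dotv b u ^+ 2).
Proof.
move=> k2 d_gt0 xa u1.
have xa_gt0 : 0 < nsq (x - a) by rewrite nsq_gt0 // subr_eq0.
have k_gt0 : 0 < k%:R :> R by rewrite ltr0n ltnW.
have b_gt0 := nsq_gt0 _ b_neq0.
have [_ ->] := is_derive_WB k x u k2 d_gt0 xa.
rewrite dotvZl [in LHS]dotvDl [in LHS]dotvBl !dotvZl -[dotv u u]/(nsq u) u1.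
rewrite /dlog_fB /fB.
by field; rewrite !lt0r_neq0.
Qed.

End InversionField.

Theorem mainTheorem6 (R : realType) (n k : nat) (Rad : R) (b x : 'rV[R]_n)
  (e : 'I_k -> 'rV[R]_n) :
  (2 <= k)%N -> 0 < Rad -> b != 0 ->
  0 < denP Rad b x -> x != ptA Rad b ->
  orthonormal_fam e ->
  divT e (WB k Rad b) x =
    fB Rad b x `^ (- (k%:R / 2)) * nsq (nproj e (x - ptA Rad b))
      / nsq (x - ptA Rad b)
  + fB Rad b x `^ (- ((k%:R - 4) / 2)) * nsq (tproj e b)
      / (nsq b ^+ 2 * nsq (x - ptA Rad b)).
Proof.
move=> k2 _ b0 d_gt0 xa e_on.
have e1 i : nsq (e i) = 1 by rewrite /nsq e_on eqxx.
have f_gt0 := fB_gt0 b0 x d_gt0 xa.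
have xa_gt0 : 0 < nsq (x - ptA Rad b) by rewrite nsq_gt0 // subr_eq0.
have b_gt0 := nsq_gt0 _ b0.
have k_gt0 : 0 < k%:R :> R by rewrite ltr0n ltnW.
rewrite /divT (eq_bigr _ (fun i _ => dotv_derive_WB b0 k2 d_gt0 xa (e1 i))).
rewrite -mulr_sumr !big_split /= sumr_const card_ord sumrN -mulr_suml -mulr_sumr.
rewrite -!nsq_tproj // nsq_nproj //.
have -> : - ((k%:R - 4) / 2) = - (k%:R / 2) + 2%:R :> R by field.
rewrite powRD ?lt0r_neq0 ?implybT // powR_mulrn ?ltW // /fB.
by field; rewrite !lt0r_neq0.
Qed.
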